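(* Let $F$ be a regular distribution with optimal monopoly price $p^{\mathsf{opt}}$, let $\varepsilon\in(0,0.1]$ and $\delta\in(0,1]$. Define $\widetilde p=p^{\mathsf{opt}}$ if $q(p^{\mathsf{opt}})\ge\varepsilon$, and otherwise let $\widetilde p$ be a price with $q(\widetilde p)=\varepsilon$. Then $\mathrm{Rev}(\widetilde p)\ge(1-\varepsilon)\,\mathrm{Rev}(p^{\mathsf{opt}})$. Furthermore, if $s\sim F$ is a single sample, then $$\Pr_{s\sim F}\Big[\frac{\delta s}{8}\le\widetilde p\le\frac{4s}{\delta\varepsilon}\Big]\ge 1-\frac{\delta}{2}.$$
   Context: $F(p)=\Pr_{v\sim F}[v<p]$, $q(p)=1-F(p)$, $\mathrm{Rev}(p)=p\,q(p)$, $p^{\mathsf{opt}}\in\arg\max_p\mathrm{Rev}(p)$. $F$ has a density $f$ and is regular if $v-\frac{1-F(v)}{f(v)}$ is nondecreasing on its support. *)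

From HB Require Import structures.
From mathcomp Require Import all_boot all_order all_algebra.
From mathcomp Require Import all_classical all_reals all_analysis.
Set Implicit Arguments. Unset Strict Implicit. Unset Printing Implicit Defensive.
Import Order.TTheory GRing.Theory Num.Theory.
Import numFieldNormedType.Exports.
Local Open Scope classical_set_scope.
Local Open Scope ring_scope.

Section Defs.
Variable R : realType.
Implicit Types (P : probability R R) (f : R -> R).

Definition cdf P (p : R) : R := fine (P [set v : R | v < p]).
Definition qf P (p : R) : R := 1 - cdf P p.
Definition Rev P (p : R) : R := p * qf P p.

Definition is_opt_price P (p : R) : Prop := forall p' : R, Rev P p' <= Rev P p.

Definition is_density P f : Prop :=
  [/\ forall x, 0 <= f x, measurable_fun setT f &
      forall A : set R, measurable A ->
        P A = (\int[lebesgue_measure]_(x in A) (f x)%:E)%E].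

Definition virtual_value P f (v : R) : R := v - (1 - cdf P v) / f v.

Definition regular P f : Prop :=
  exists I : set R,
    [/\ is_interval I, I `<=` [set x | 0 <= x],
        (forall x, I x -> 0 < f x), (forall x, ~ I x -> f x = 0) &
        (forall x y, I x -> I y -> x <= y ->
           virtual_value P f x <= virtual_value P f y)].
End Defs.

From Pilot Require Import Defs.
From HB Require Import structures.
From mathcomp Require Import all_boot all_order all_algebra.
From mathcomp Require Import all_classical all_reals all_analysis.
From mathcomp Require Import ring lra measurable_realfun.
Set Implicit Arguments. Unset Strict Implicit. Unset Printing Implicit Defensive.
Import Order.TTheory GRing.Theory Num.Theory.
Local Open Scope classical_set_scope.
Local Open Scope ring_scope.

(* Rev(s) - Rev(t) is the integral over [s, t) of phi(v) f(v), phi the virtual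
   value.  For a regular distribution phi is nondecreasing, which makes
   Rev(p) / F(p) nonincreasing on the support (in quantile space: the revenue
   curve is concave and nonnegative at quantile 1).  Comparing ptilde with
   popt gives the revenue bound, since F(ptilde) = 1 - eps whenever
   ptilde <> popt.  For z = delta eps ptilde / 4, comparing z with ptilde gives
   F(z) <= z / Rev(ptilde) <= delta / 4; for w = 8 ptilde / delta, optimality
   of popt gives q(w) <= Rev(popt) / w <= Rev(ptilde) / ((1 - eps) w)
   <= delta / 4.  The sample window is exactly [z, w]. *)

Section cdf.
Variables (R : realType) (P : probability R R).
Local Notation F := (Defs.cdf P).
Local Notation q := (qf P).

Lemma measurable_lt_set (p : R) : measurable [set v : R | v < p].
Proof. by rewrite -set_itvNyo; exact: measurable_itv. Qed.
#[local] Hint Resolve measurable_lt_set : core.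

Lemma measurable_ge_set (p : R) : measurable [set v : R | p <= v].
Proof. by rewrite -set_itvcy; exact: measurable_itv. Qed.

Lemma cdfE p : P [set v : R | v < p] = (F p)%:E.
Proof. by rewrite /Defs.cdf fineK // fin_num_measure. Qed.

Lemma cdf_ge0 p : 0 <= F p.
Proof. by rewrite -lee_fin -cdfE. Qed.

Lemma cdf_le1 p : F p <= 1.
Proof. by rewrite -lee_fin -cdfE probability_le1. Qed.

Lemma nondecreasing_cdf : {homo F : x y / x <= y}.
Proof.
move=> x y xy; rewrite -lee_fin -!cdfE.
by apply: le_measure; rewrite ?inE // => v /= /lt_le_trans; apply.
Qed.

Lemma nonincreasing_qf : {homo q : x y /~ x <= y}.
Proof. by move=> x y xy; rewrite lerB // nondecreasing_cdf. Qed.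

Lemma qfE p : P [set v : R | p <= v] = (q p)%:E.
Proof.
have -> : [set v : R | p <= v] = ~` [set v | v < p].
  by apply/seteqP; split => x /=; rewrite leNgt => /negP.
by rewrite probability_setC // cdfE /qf EFinB.
Qed.

Lemma qf_ge0 p : 0 <= q p.
Proof. by rewrite /qf subr_ge0 cdf_le1. Qed.

Lemma qf_le1 p : q p <= 1.
Proof. by rewrite /qf lerBlDr lerDl cdf_ge0. Qed.

Lemma measurable_cdf : measurable_fun setT F.
Proof. exact: nondecreasing_measurable nondecreasing_cdf. Qed.

Lemma measurable_qf : measurable_fun setT q.
Proof. exact: measurable_funB measurable_cdf. Qed.

Lemma measure_itvco_cdf (a b : R) : a <= b -> P `[a, b[%classic = (F b - F a)%:E.
Proof.
move=> ab.
have -> : `[a, b[%classic = [set v : R | v < b] `\` [set v : R | v < a].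
  apply/seteqP; split => x /=; rewrite in_itv /=.
    by case/andP => ax xb; split => //; apply/negP; rewrite -leNgt.
  by case => -> /negP; rewrite -leNgt => ->.
rewrite measureD //; last first.
  by rewrite (le_lt_trans (probability_le1 _ _)) ?ltry.
have -> : [set v : R | v < b] `&` [set v : R | v < a] = [set v : R | v < a].
  apply/seteqP; split => x /=; first by case.
  by move=> xa; split => //; exact: lt_le_trans xa ab.
by rewrite EFinB -!cdfE.
Qed.

Lemma measure_itvcc_ge (a b : R) : a <= b ->
  ((1 - F a - q b)%:E <= P `[a, b]%classic)%E.
Proof.
move=> ab; have -> : 1 - F a - q b = F b - F a by rewrite /qf; ring.
rewrite -measure_itvco_cdf //; apply: le_measure; rewrite ?inE; try exact: measurable_itv.
by apply/subset_itvP; exact: subset_itv_co_cc.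
Qed.

End cdf.

Section density.
Variables (R : realType) (P : probability R R) (f : R -> R).
Hypothesis hf : is_density P f.
Local Notation F := (Defs.cdf P).
Local Notation q := (qf P).
Local Notation L := (@lebesgue_measure R).

Let f_ge0 x : 0 <= f x. Proof. by case: hf. Qed.
Let measurable_f : measurable_fun setT f. Proof. by case: hf. Qed.

Lemma integral_density_itvco (a b : R) : a <= b ->
  (\int[L]_(x in `[a, b[) (f x)%:E = (F b - F a)%:E)%E.
Proof.
move=> ab; case: hf => _ _ /(_ _ (measurable_itv `[a, b[)) <-.
exact: measure_itvco_cdf.
Qed.

Section itvco.
Variables s t : R.
Hypothesis st : s <= t.
Let D := `[s, t[%classic : set R.

Let tri (z : R * R) : \bar R :=
  (if (z.1 \in `[s, t[) && (z.2 \in `[s, t[) && (z.1 <= z.2) then f z.2 else 0)%:E.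

Let measurable_tri : measurable_fun setT tri.
Proof.
have mitv (k : R * R -> R) : measurable_fun setT k ->
    measurable_fun setT (fun z => k z \in `[s, t[).
  move=> mk; under eq_fun do rewrite in_itv/=.
  by apply: measurable_and; [exact: measurable_fun_ler | exact: measurable_fun_ltr].
apply/measurable_EFinP; apply: measurable_fun_ifT => //=; last first.
  exact: measurableT_comp measurable_f measurable_snd.
apply: measurable_and; first apply: measurable_and.
- exact: mitv measurable_fst.
- exact: mitv measurable_snd.
- exact: measurable_fun_ler measurable_fst measurable_snd.
Qed.

Let tri_ge0 z : (0 <= tri z)%E.
Proof. by rewrite /tri lee_fin; case: ifP. Qed.

Let integral_tri_snd u :
  (\int[L]_y tri (u, y) = (if u \in `[s, t[ then F t - F u else 0)%:E)%E.
Proof.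
have [uI|uI] := boolP (u \in `[s, t[); last first.
  by apply: integral0_eq => y _; rewrite /tri /= (negbTE uI).
move: (uI); rewrite in_itv /= => /andP[su ut].
rewrite -integral_density_itvco ?ltW // [RHS]integral_mkcond.
apply: eq_integral => y _; rewrite /tri /= uI patchE mem_setE.
suff -> : (y \in `[s, t[) && (u <= y) = (y \in `[u, t[) by case: ifP.
rewrite !in_itv /=; apply/idP/idP; first by case/andP => /andP[_ ->] ->.
by case/andP => uy ->; rewrite uy (le_trans su uy).
Qed.

Let integral_tri_fst v :
  (\int[L]_x tri (x, v) = (if v \in `[s, t[ then (v - s) * f v else 0)%:E)%E.
Proof.
have [vI|vI] := boolP (v \in `[s, t[); last first.
  by apply: integral0_eq => x _; rewrite /tri /= (negbTE vI) andbF.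
move: (vI); rewrite in_itv /= => /andP[sv vt].
transitivity (\int[L]_(x in `[s, v]) (cst (f v)%:E) x)%E.
  rewrite [RHS]integral_mkcond; apply: eq_integral => x _.
  rewrite /tri /= vI patchE mem_setE andbT.
  suff -> : (x \in `[s, t[) && (x <= v) = (x \in `[s, v]) by case: ifP.
  rewrite !in_itv /=; apply/idP/idP; first by case/andP => /andP[-> _] ->.
  by case/andP => -> xv; rewrite xv (le_lt_trans xv vt).
rewrite integral_cst; last exact: measurable_itv.
have := lebesgue_measure_itv `[s, v]; rewrite /= lte_fin => ->.
case: ltP => [_|vs]; first by rewrite -EFinB -EFinM mulrC.
have -> : v = s by apply/eqP; rewrite eq_le vs sv.
by rewrite subrr mul0r mule0.
Qed.

(* Both sides are the integral of f(v) over the triangle s <= u <= v < t. *)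
Lemma integral_cdf_gap :
  (\int[L]_(u in D) (F t - F u)%:E = \int[L]_(v in D) ((v - s) * f v)%:E)%E.
Proof.
transitivity (\int[L]_u \int[L]_v tri (u, v))%E.
  rewrite integral_mkcond; apply: eq_integral => u _.
  by rewrite integral_tri_snd patchE mem_setE; case: ifP.
rewrite (@fubini_tonelli _ _ _ _ R L L tri measurable_tri tri_ge0).
rewrite [RHS]integral_mkcond.
apply: eq_integral => v _.
by rewrite integral_tri_fst patchE mem_setE; case: ifP.
Qed.

Let measurable_D : measurable D. Proof. exact: measurable_itv. Qed.

Let lebesgue_D : L D = (t - s)%:E.
Proof.
have := lebesgue_measure_itv `[s, t[; rewrite /= lte_fin -EFinB => ->.
case: ltP => // ts; have -> : t = s by apply/eqP; rewrite eq_le st ts.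
by rewrite subrr.
Qed.

Let norm_le_D x : D x -> `|x| <= `|s| + `|t|.
Proof.
rewrite /D /= in_itv /= => /andP[sx xt].
have := ler_norm t; have := ler_norm (- s); rewrite normrN => ns nt.
have := normr_ge0 s; have := normr_ge0 t => s0 t0.
by case: (lerP 0 x) => x0; [rewrite ger0_norm | rewrite ltr0_norm] => //; lra.
Qed.

Let bounded_on_D (h : R -> R) (B : R) :
  (forall x, D x -> `|h x| <= B) -> [bounded h x | x in D].
Proof.
move=> hB; exists B; split; first exact: num_real.
by move=> M BM x Dx /=; apply: le_trans (hB x Dx) (ltW BM).
Qed.

Let integrable_bounded (h : R -> R) (B : R) : measurable_fun setT h ->
  (forall x, D x -> `|h x| <= B) -> L.-integrable D (EFin \o h).
Proof.
move=> mh hB; apply: measurable_bounded_integrable => //.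
- by change (L D < +oo)%E; rewrite lebesgue_D ltry.
- exact: measurable_funS mh.
- exact: bounded_on_D hB.
Qed.

Let integrable_density : L.-integrable D (EFin \o f).
Proof.
apply/integrableP; split.
  by apply/measurable_EFinP; exact: measurable_funS measurable_f.
under eq_integral do rewrite /= ger0_norm ?f_ge0 //.
by rewrite integral_density_itvco // ltry.
Qed.

Let integrable_boundedM_density (h : R -> R) (B : R) : measurable_fun setT h ->
  (forall x, D x -> `|h x| <= B) -> L.-integrable D (EFin \o (fun x => h x * f x)).
Proof.
move=> mh hB.
have := @integrableMr _ _ _ L D measurable_D _ _ (measurable_funS measurableT (@subsetT _ D) mh)
  (bounded_on_D hB) integrable_density.
by apply: eq_integrable => // x _ /=; rewrite EFinM.
Qed.

Let integrable_qf : L.-integrable D (EFin \o q).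
Proof.
apply: (@integrable_bounded q 1 (measurable_qf P)) => x _.
by rewrite ger0_norm ?qf_ge0 ?qf_le1.
Qed.

Let integrable_scaled_density k : L.-integrable D (EFin \o (fun v => k * f v)).
Proof. exact: integrable_boundedM_density (measurable_cst k) (fun x _ => lexx `|k|). Qed.

Let integrable_idM_density : L.-integrable D (EFin \o (fun v => v * f v)).
Proof. exact: integrable_boundedM_density (@measurable_id _ _ setT) norm_le_D. Qed.

Let integrable_revenue_rate : L.-integrable D (EFin \o (fun v => v * f v - q v)).
Proof.
have := @integrableB _ _ _ L D measurable_D _ _ integrable_idM_density integrable_qf.
by apply: eq_integrable => // x _ /=; rewrite EFinB.
Qed.

Lemma Rintegral_density_itvco k : \int[L]_(v in D) (k * f v) = k * (F t - F s).
Proof. by rewrite RintegralZl // /Rintegral integral_density_itvco. Qed.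

Lemma Rintegral_revenue_itvco :
  \int[L]_(v in D) (v * f v - q v) = Rev P s - Rev P t.
Proof.
have integrable_shift : L.-integrable D (EFin \o (fun v => (v - s) * f v)).
  apply: (@integrable_boundedM_density _ (t - s)
    (measurable_funB (@measurable_id _ _ setT) (measurable_cst s))).
  move=> x; rewrite /D /= in_itv /= => /andP[sx xt].
  by rewrite ger0_norm ?subr_ge0 // lerD2r ltW.
have integrable_gap : L.-integrable D (EFin \o (fun u => F t - F u)).
  apply: (@integrable_bounded (fun u => F t - F u) 1
    (measurable_funB (measurable_cst _) (measurable_cdf P))).
  move=> x xD; have xt : x < t by move: xD; rewrite /D /= in_itv /= => /andP[].
  rewrite ger0_norm; last by rewrite subr_ge0 nondecreasing_cdf // ltW.
  by have := cdf_le1 P t; have := cdf_ge0 P x => x0 t1; lra.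
rewrite RintegralB //.
have -> : \int[L]_(v in D) (v * f v) =
    \int[L]_(v in D) ((v - s) * f v) + \int[L]_(v in D) (s * f v).
  by rewrite -RintegralD //; apply: eq_Rintegral => x _; ring.
have -> : \int[L]_(v in D) ((v - s) * f v) = \int[L]_(u in D) (F t - F u).
  by rewrite /Rintegral integral_cdf_gap.
rewrite Rintegral_density_itvco addrAC -RintegralB //.
have -> : \int[L]_(u in D) (F t - F u - q u) = \int[L]_(u in D) (F t - 1).
  by apply: eq_Rintegral => x _; rewrite /qf; ring.
rewrite Rintegral_cst // (_ : fine (L D) = t - s); last by rewrite lebesgue_D.
by rewrite /Rev /qf; ring.
Qed.

Lemma Rev_drop_le k : (forall v, s <= v < t -> v * f v - q v <= k * f v) ->
  Rev P s - Rev P t <= k * (F t - F s).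
Proof.
move=> le_rate; rewrite -Rintegral_revenue_itvco -Rintegral_density_itvco.
by apply: le_Rintegral => // x; rewrite /D /= in_itv /=; exact: le_rate.
Qed.

Lemma Rev_drop_ge k : (forall v, s <= v < t -> k * f v <= v * f v - q v) ->
  k * (F t - F s) <= Rev P s - Rev P t.
Proof.
move=> ge_rate; rewrite -Rintegral_revenue_itvco -Rintegral_density_itvco.
by apply: le_Rintegral => // x; rewrite /D /= in_itv /=; exact: ge_rate.
Qed.

End itvco.

Lemma cdf_lt_of_density_gt0 (s t : R) : s < t ->
  (forall v, s <= v < t -> 0 < f v) -> F s < F t.
Proof.
move=> st fpos; rewrite lt_neqAle nondecreasing_cdf ?ltW // andbT; apply/negP => /eqP Fst.
have int0 : (\int[L]_(x in `[s, t[) `|(f x)%:E| = 0)%E.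
  under eq_integral do rewrite gee0_abs ?lee_fin //.
  by rewrite integral_density_itvco ?ltW // Fst subrr.
have [|N [mN N0 subN]] := (@ae_eq_integral_abs _ _ _ L _ (measurable_itv `[s, t[) _ _).1 int0.
  by apply/measurable_EFinP; exact: measurable_funS measurable_f.
have : (L `[s, t[%classic <= L N)%E.
  apply: le_measure; rewrite ?inE //.
  move=> x xI; apply: subN => /= /(_ xI) [] fx0.
  by move: xI; rewrite /= in_itv /= => /fpos; rewrite fx0 ltxx.
have := lebesgue_measure_itv `[s, t[; rewrite /= lte_fin st -EFinB => ->.
by rewrite N0 lee_fin leNgt subr_gt0 st.
Qed.

Lemma cdf_eq_of_density_eq0 (s t : R) : s <= t ->
  (forall v, s < v < t -> f v = 0) -> F t = F s.
Proof.
move=> st f0; apply/eqP; rewrite -subr_eq0; apply/eqP.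
suff : (F t - F s)%:E = 0%:E by case.
rewrite -integral_density_itvco //.
rewrite (@ge0_negligible_integral _ _ _ L `[s, t[ [set s] (fun x => (f x)%:E)) //.
- apply: integral0_eq => x [] /=; rewrite in_itv /= => /andP[sx xt] xs.
  by rewrite f0 // xt andbT lt_neqAle sx andbT eq_sym; apply/eqP.
- by apply/measurable_EFinP; exact: measurable_funS measurable_f.
- by move=> x _; rewrite lee_fin.
- exact: lebesgue_measure_set1.
Qed.

End density.

Lemma sample_window_itv (R : realType) (delta eps p : R) : 0 < delta -> 0 < eps ->
  [set s : R | delta * s / 8 <= p <= 4 * s / (delta * eps)] =
  `[p * (delta / 4 * eps), p / (delta / 8)]%classic.
Proof.
move=> d0 e0.
have upper s : (delta * s / 8 <= p) = (s <= p / (delta / 8)).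
  by rewrite ler_pdivlMr ?divr_gt0 // mulrA [s * _]mulrC.
have lower s : (p <= 4 * s / (delta * eps)) = (p * (delta / 4 * eps) <= s).
  rewrite ler_pdivlMr ?mulr_gt0 // (_ : p * (delta / 4 * eps) = p * (delta * eps) / 4).
    by rewrite ler_pdivrMr // [s * 4]mulrC.
  by ring.
by apply/seteqP; split => s /=; rewrite in_itv /= upper lower andbC.
Qed.

Section regular.
Variables (R : realType) (P : probability R R) (f : R -> R) (I : set R).
Hypotheses (hf : is_density P f) (I_itv : is_interval I)
  (I_ge0 : I `<=` [set x | 0 <= x])
  (f_gt0 : forall x, I x -> 0 < f x) (f_eq0 : forall x, ~ I x -> f x = 0)
  (phi_mono : forall x y, I x -> I y -> x <= y ->
     virtual_value P f x <= virtual_value P f y).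
Local Notation F := (Defs.cdf P).
Local Notation q := (qf P).

Lemma support_ge_of_qf_gt0 p : 0 < q p -> exists2 v, p <= v & I v.
Proof.
move=> qp; apply: contrapT => noI; move: qp; rewrite lt_def => /andP[/eqP + _]; apply.
suff : (q p)%:E = 0%:E by case.
rewrite -qfE; case: hf => _ _ ->; last exact: measurable_ge_set.
by apply: integral0_eq => x /= px; rewrite f_eq0 // => Ix; apply: noI; exists x.
Qed.

Lemma support_lt_of_cdf_gt0 p : 0 < F p -> exists2 v, v < p & I v.
Proof.
move=> Fp; apply: contrapT => noI; move: Fp; rewrite lt_def => /andP[/eqP + _]; apply.
suff : (F p)%:E = 0%:E by case.
rewrite -cdfE; case: hf => _ _ ->; last exact: measurable_lt_set.
by apply: integral0_eq => x /= xp; rewrite f_eq0 // => Ix; apply: noI; exists x.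
Qed.

Lemma support_of_cdf_qf_gt0 p : 0 < F p -> 0 < q p -> I p.
Proof.
move=> /support_lt_of_cdf_gt0 [v vp Iv] /support_ge_of_qf_gt0 [w pw Iw].
by apply: (I_itv Iv Iw); rewrite (ltW vp) pw.
Qed.

Lemma cdf0 : F 0 = 0.
Proof.
apply/eqP; rewrite eq_le cdf_ge0 andbT leNgt; apply/negP.
by move=> /support_lt_of_cdf_gt0 [v v0 /I_ge0]; rewrite /= leNgt v0.
Qed.

Lemma virtual_valueM_density v : I v -> virtual_value P f v * f v = v * f v - q v.
Proof. by move=> Iv; rewrite /virtual_value mulrBl mulfVK ?lt0r_neq0 ?f_gt0. Qed.

(* phi >= phi(x) on [x, y), and phi <= phi(x) on [0, x) where f vanishes off
   the support; the two resulting drops of Rev combine by the identity below. *)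
Lemma Rev_cdf_cross_le x y : I x -> I y -> x <= y -> Rev P y * F x <= Rev P x * F y.
Proof.
move=> Ix Iy xy; set k := virtual_value P f x.
have drop_xy : k * (F y - F x) <= Rev P x - Rev P y.
  apply: (Rev_drop_ge hf xy) => v /andP[xv vy].
  have Iv : I v by apply: (I_itv Ix Iy); rewrite xv ltW.
  by rewrite -virtual_valueM_density // ler_wpM2r ?phi_mono // ltW ?f_gt0.
have drop_0x : Rev P 0 - Rev P x <= k * (F x - F 0).
  apply: (Rev_drop_le hf (I_ge0 Ix)) => v /andP[_ vx].
  have [Iv|nIv] := pselect (I v).
    rewrite -virtual_valueM_density // ler_wpM2r ?phi_mono ?(ltW vx) //.
    exact: ltW (f_gt0 Iv).
  by rewrite f_eq0 // !mulr0 sub0r oppr_le0 qf_ge0.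
have Rev0 : Rev P 0 = 0 by rewrite /Rev mul0r.
rewrite Rev0 cdf0 subr0 sub0r in drop_0x.
rewrite -subr_ge0.
have -> : Rev P x * F y - Rev P y * F x =
    (Rev P x - Rev P y - k * (F y - F x)) * F x + (Rev P x + k * F x) * (F y - F x).
  by ring.
apply: addr_ge0; apply: mulr_ge0.
- by rewrite subr_ge0.
- exact: cdf_ge0.
- by rewrite -lerBlDl sub0r.
- by rewrite subr_ge0 nondecreasing_cdf.
Qed.

Lemma exists_price_gt0_qf_gt0 : exists2 p, 0 < p & 0 < q p.
Proof.
apply: contrapT => noP.
have F1 p : 0 < p -> F p = 1.
  move=> p0; apply/eqP; rewrite eq_le cdf_le1 leNgt; apply/negP => Fp1.
  by apply: noP; exists p; rewrite // /qf subr_gt0.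
have [[y Iy y0]|noI] := pselect (exists2 y, I y & 0 < y).
  have [x xy Ix] : exists2 x, x < y & I x.
    by apply: support_lt_of_cdf_gt0; rewrite F1 ?ltr01.
  have x0 : 0 <= x := I_ge0 Ix.
  have : F ((x + y) / 2) < F y.
    apply: (cdf_lt_of_density_gt0 hf); first lra.
    move=> v /andP[mv vy]; apply/f_gt0/(I_itv Ix Iy).
    by apply/andP; split; lra.
  by rewrite !F1 ?ltxx //; lra.
have : F 1 = F 0.
  apply: (cdf_eq_of_density_eq0 hf ler01) => v /andP[v0 _].
  by apply: f_eq0 => Iv; apply: noI; exists v.
by rewrite F1 ?ltr01 // cdf0 => /eqP; rewrite oner_eq0.
Qed.

Lemma opt_price_gt0 popt : is_opt_price P popt -> 0 < popt.
Proof.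
move=> popt_opt; have [p p0 qp] := exists_price_gt0_qf_gt0.
rewrite ltNge; apply/negP => popt_le0.
have : 0 < Rev P p by rewrite mulr_gt0.
have : Rev P popt <= 0 by rewrite mulr_le0_ge0 // qf_ge0.
by have := popt_opt p; lra.
Qed.

Lemma cdf_mul_Rev_le z p : 0 <= z -> z <= p -> 0 < q p -> Rev P p * F z <= z.
Proof.
move=> z0 zp qp.
have [Fz0|Fz_gt0] := lerP (F z) 0.
  by rewrite (le_trans _ z0) // mulr_ge0_le0 // mulr_ge0 ?qf_ge0 ?(le_trans z0).
have Iz : I z.
  apply: support_of_cdf_qf_gt0 => //.
  by apply: lt_le_trans qp _; exact: nonincreasing_qf.
have Ip : I p.
  apply: support_of_cdf_qf_gt0 => //.
  by apply: lt_le_trans Fz_gt0 _; exact: nondecreasing_cdf.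
apply: le_trans (Rev_cdf_cross_le Iz Ip zp) _.
have Rz_ge0 : 0 <= Rev P z by rewrite mulr_ge0 ?qf_ge0.
apply: le_trans (_ : Rev P z <= _); first by rewrite ler_piMr ?cdf_le1.
by rewrite ler_piMr ?qf_le1.
Qed.

Section ptilde.
Variables (popt eps pt : R).
Hypotheses (popt_opt : is_opt_price P popt) (eps_gt0 : 0 < eps) (eps_lt1 : eps < 1)
  (pt_popt : eps <= q popt -> pt = popt) (qf_pt : q popt < eps -> q pt = eps).

Lemma Rev_ptilde_ge : (1 - eps) * Rev P popt <= Rev P pt.
Proof.
have [eps_le|qpopt_lt] := lerP eps (q popt).
  have Rev_popt_ge0 : 0 <= Rev P popt by have := popt_opt 0; rewrite /Rev mul0r.
  by rewrite (pt_popt eps_le) mulrBl mul1r lerBlDr lerDl mulr_ge0 // ltW.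
have qpt := qf_pt qpopt_lt.
have Fpt : F pt = 1 - eps by rewrite -qpt /qf; ring.
have Ipt : I pt by apply: support_of_cdf_qf_gt0; rewrite ?Fpt ?qpt // subr_gt0.
have [qpopt0|qpopt_gt0] := lerP (q popt) 0.
  have -> : Rev P popt = 0.
    by rewrite /Rev (_ : q popt = 0) ?mulr0 //; apply/eqP; rewrite eq_le qpopt0 qf_ge0.
  by rewrite mulr0 mulr_ge0 ?qf_ge0 ?I_ge0.
have Ipopt : I popt.
  apply: support_of_cdf_qf_gt0 => //.
  by move: qpopt_lt eps_lt1; rewrite /qf; lra.
have pt_le : pt <= popt.
  rewrite leNgt; apply/negP => /ltW/(@nonincreasing_qf _ P).
  by rewrite qpt; lra.
have := Rev_cdf_cross_le Ipt Ipopt pt_le; rewrite Fpt mulrC => /le_trans; apply.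
by rewrite ler_piMr ?cdf_le1 // mulr_ge0 ?qf_ge0 ?I_ge0.
Qed.

Lemma qf_ptilde_ge : eps <= q pt.
Proof. by case: (lerP eps (q popt)) => [/pt_popt -> // | /qf_pt ->]. Qed.

Lemma ptilde_gt0 : 0 < pt.
Proof.
have [/pt_popt -> |/qf_pt qpt] := lerP eps (q popt); first exact: opt_price_gt0.
have [v vpt /I_ge0 v0] : exists2 v, v < pt & I v.
  by apply: support_lt_of_cdf_gt0; move: qpt eps_lt1; rewrite /qf; lra.
exact: le_lt_trans v0 vpt.
Qed.

Lemma cdf_ptilde_scaled_le c : 0 <= c <= 1 -> F (pt * (c * eps)) <= c.
Proof.
case/andP => c0 c1; have pt0 := ptilde_gt0; have qpt := qf_ptilde_ge.
have eps_ge0 := ltW eps_gt0.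
have z0 : 0 <= pt * (c * eps) by rewrite !mulr_ge0 // ltW.
have zpt : pt * (c * eps) <= pt.
  by rewrite ler_piMr // ?mulr_ge0 //; move: eps_lt1; nra.
have := cdf_mul_Rev_le z0 zpt (lt_le_trans eps_gt0 qpt).
rewrite /Rev -mulrA ler_pM2l // => qF_le.
rewrite -(ler_pM2r eps_gt0); apply: le_trans qF_le.
by rewrite mulrC ler_wpM2r ?cdf_ge0.
Qed.

Lemma qf_ptilde_scaled_le c : 0 < c -> (1 - eps) * q (pt / c) <= c.
Proof.
move=> c0; have pt0 := ptilde_gt0.
have : (1 - eps) * Rev P (pt / c) <= pt.
  apply: le_trans (_ : (1 - eps) * Rev P popt <= _).
    by rewrite ler_wpM2l ?popt_opt // subr_ge0 ltW.
  apply: le_trans Rev_ptilde_ge _.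
  by rewrite ler_piMr ?qf_le1 // ltW.
rewrite /Rev => Rev_le.
by rewrite -(ler_pM2l (divr_gt0 pt0 c0)) mulrCA divfK ?gt_eqF.
Qed.

Lemma ptilde_sample_window (delta : R) : 0 < delta -> delta <= 1 -> eps <= 1 / 10 ->
  ((1 - delta / 2)%:E <=
     P [set s : R | (delta * s / 8 <= pt <= 4 * s / (delta * eps))%R])%E.
Proof.
move=> d0 d1 eps_le; have pt0 := ptilde_gt0; have e0 := eps_gt0.
have d8 : 0 < delta / 8 by rewrite divr_gt0.
have lower : F (pt * (delta / 4 * eps)) <= delta / 4.
  by apply: cdf_ptilde_scaled_le; apply/andP; split; lra.
have upper : q (pt / (delta / 8)) <= delta / 4.
  by have := qf_ptilde_scaled_le d8; have := qf_ge0 P (pt / (delta / 8)); nra.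
have window : pt * (delta / 4 * eps) <= pt / (delta / 8).
  apply: (@le_trans _ _ pt); first by rewrite ler_piMr ?(ltW pt0) //; nra.
  by rewrite ler_pdivlMr // ler_piMr ?(ltW pt0) //; lra.
rewrite sample_window_itv //; apply: le_trans (measure_itvcc_ge P window).
by rewrite lee_fin; lra.
Qed.

End ptilde.

End regular.

Unset Implicit Arguments.

Theorem lemma4p3 (R : realType) (P : probability R R) (f : R -> R)
    (popt eps delta ptilde : R) :
  is_density P f -> regular P f -> is_opt_price P popt ->
  0 < eps -> eps <= 1 / 10 -> 0 < delta -> delta <= 1 ->
  (eps <= qf P popt -> ptilde = popt) ->
  (qf P popt < eps -> qf P ptilde = eps) ->
  (1 - eps) * Rev P popt <= Rev P ptilde /\
  ((1 - delta / 2)%:E <=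
     P [set s : R | (delta * s / 8 <= ptilde <= 4 * s / (delta * eps))%R])%E.
Proof.
move=> hf [I [I_itv I_ge0 f_gt0 f_eq0 phi_mono]] popt_opt eps_gt0 eps_le
  delta_gt0 delta_le1 pt_popt qf_pt.
have eps_lt1 : eps < 1 by lra.
split.
- exact: (Rev_ptilde_ge hf I_itv I_ge0 f_gt0 f_eq0 phi_mono
    popt_opt eps_gt0 eps_lt1 pt_popt qf_pt).
- exact: (ptilde_sample_window hf I_itv I_ge0 f_gt0 f_eq0 phi_mono
    popt_opt eps_gt0 eps_lt1 pt_popt qf_pt delta_gt0 delta_le1 eps_le).
Qed.
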